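(* In the sequential contribution game described in the context, let $U$ be an open set of parameter triples $(\gamma,\rho,B)$ with $\gamma>0$, $\rho>0$, $0<B<c_{\max}$, such that for every $(\gamma,\rho,B)\in U$ (with $P$ fixed) the inequalities \[ \rho > n\max_i\ell_i'(c_{\max}),\quad \gamma > \max_{k=2,\dots,n}\frac{\ell_k'(c_{\max})B-\rho/n}{c_{\min}/B},\quad P > \Bigl(\max_i\ell_i'(c_{\max})+\gamma\tfrac{c_{\max}}{B}+\tfrac{\rho}{n}\Bigr)(c_{\max}-c_{\min}) \] hold, so that the game has a unique SPNE outcome $c^*(\gamma,\rho,B)$. Define total equilibrium welfare $W(\gamma,\rho,B)=\sum_{i=1}^n R_i\bigl(c^*(\gamma,\rho,B);\gamma,\rho,B\bigr)$. Then on $U$, $W$ is differentiable and \[ \frac{\partial W}{\partial\gamma}>0,\qquad \frac{\partial W}{\partial\rho}>0,\qquad \frac{\partial W}{\partial B}<0, \] i.e. total welfare is increasing in the cooperation coefficient $\gamma$ and in the sharing rate $\rho$, and decreasing in the threshold $B$.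
   Context: Sequential contribution game (MAC-SPGG). There are $n\ge 2$ agents acting once each in the fixed order $1,2,\dots,n$. Agent $i$ observes the previous contributions $c_1,\dots,c_{i-1}$ (perfect information) and chooses a contribution (score) $c_i\in[c_{\min},c_{\max}]$, where $0<c_{\min}\le c_{\max}<\infty$. A task threshold $B>0$ is given. Convention: $c_0:=0$. Write $S_n=\sum_{j=1}^n c_j$. Each agent $i$ has a cost function $\ell_i:[c_{\min},c_{\max}]\to\mathbb{R}$ that is strictly convex, twice continuously differentiable, with $\ell_i'>0$. Parameters $\rho>0$ (task reward multiplier), $\gamma>0$ (cooperation coefficient), $P>0$ (failure penalty). The payoff of agent $i$ for the profile $c=(c_1,\dots,c_n)$, depending on parameters $(\gamma,\rho,B)$, is \[ R_i(c;\gamma,\rho,B)= -\ell_i(c_i)+\gamma\,\frac{c_{i-1}}{B}\,c_i+\frac{\rho}{n}\,S_n-P\cdot\mathbf{1}(c_n<B). \] SPNE denotes subgame perfect Nash equilibrium of this finite perfect-information game. *)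

From Stdlib Require Import Reals Lra List.
Open Scope R_scope.

Definition has_deriv_on (a b : R) (f df : R -> R) : Prop :=
  forall x, a <= x <= b -> forall eps, 0 < eps ->
    exists delta, 0 < delta /\
      forall h, h <> 0 -> Rabs h < delta -> a <= x + h <= b ->
        Rabs ((f (x + h) - f x) / h - df x) < eps.

Definition cont_on (a b : R) (f : R -> R) : Prop :=
  forall x, a <= x <= b -> forall eps, 0 < eps ->
    exists delta, 0 < delta /\
      forall y, a <= y <= b -> Rabs (y - x) < delta -> Rabs (f y - f x) < eps.

Definition strictly_convex_on (a b : R) (f : R -> R) : Prop :=
  forall x y t, a <= x <= b -> a <= y <= b -> x <> y -> 0 < t < 1 ->
    f (t * x + (1 - t) * y) < t * f x + (1 - t) * f y.

Definition admissible_cost (a b : R) (l dl : R -> R) : Prop :=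
  strictly_convex_on a b l /\
  (exists d2, has_deriv_on a b l dl /\ has_deriv_on a b dl d2 /\ cont_on a b d2) /\
  (forall x, a <= x <= b -> 0 < dl x).

(** Profiles/histories are lists [c_1; ...; c_k]; [get c j] = c_j, with c_0 = 0. *)
Definition get (c : list R) (j : nat) : R :=
  match j with O => 0 | S k => nth k c 0 end.

Definition total (n : nat) (c : list R) : R :=
  fold_right Rplus 0 (map (get c) (seq 1 n)).

Definition payoff (n : nat) (l : nat -> R -> R) (P gamma rho B : R)
    (c : list R) (i : nat) : R :=
  - l i (get c i) + gamma * (get c (i - 1) / B) * get c i
  + rho / INR n * total n c
  - P * (if Rlt_dec (get c n) B then 1 else 0).

(** A strategy profile: agent i maps the observed history [c_1;...;c_{i-1}] to c_i. *)
Definition strategy := nat -> list R -> R.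

Fixpoint play (s : strategy) (k : nat) (h : list R) : list R :=
  match k with
  | O => h
  | S k' => play s k' (h ++ (s (S (length h)) h :: nil))
  end.

Definition outcome (n : nat) (s : strategy) (h : list R) : list R :=
  play s (n - length h) h.

Definition feasible_strategy (cmin cmax : R) (s : strategy) : Prop :=
  forall i h, cmin <= s i h <= cmax.

Definition feasible_history (cmin cmax : R) (h : list R) : Prop :=
  List.Forall (fun x => cmin <= x <= cmax) h.

Definition deviate (s : strategy) (i : nat) (t : list R -> R) : strategy :=
  fun j h => if Nat.eqb j i then t h else s j h.

Definition is_SPNE (n : nat) (cmin cmax : R) (l : nat -> R -> R)
    (P gamma rho B : R) (s : strategy) : Prop :=
  feasible_strategy cmin cmax s /\
  forall h, feasible_history cmin cmax h -> (length h < n)%nat ->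
  forall i, (length h < i <= n)%nat ->
  forall t : list R -> R, (forall h', cmin <= t h' <= cmax) ->
    payoff n l P gamma rho B (outcome n (deviate s i t) h) i
      <= payoff n l P gamma rho B (outcome n s h) i.

Definition is_SPNE_outcome (n : nat) (cmin cmax : R) (l : nat -> R -> R)
    (P gamma rho B : R) (c : list R) : Prop :=
  exists s, is_SPNE n cmin cmax l P gamma rho B s /\ outcome n s nil = c.

Definition welfare (n : nat) (l : nat -> R -> R) (P gamma rho B : R)
    (c : list R) : R :=
  fold_right Rplus 0 (map (payoff n l P gamma rho B c) (seq 1 n)).

Definition max_range (a b : nat) (f : nat -> R) : R :=
  fold_right Rmax (f a) (map f (seq a (S (b - a)))).

From Stdlib Require Import Reals List Lra Lia.
From Coquelicot Require Import Coquelicot.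
Open Scope R_scope.

(* The bound rho > n max_i l_i'(c_max) makes c_max a strictly dominant choice after every
   history.  Raising one's own contribution from x to c_max adds rho/n per unit through the
   shared reward, which exceeds the extra cost since a convex cost has slope below l_i'(c_max)
   on [x, c_max]; it does not lower the cooperation bonus, whose coefficient gamma c_{i-1}/B is
   nonnegative; and it cannot trigger the failure penalty, as c_max > B.  Backward induction
   then shows that every SPNE plays c_max after every history, so on U the SPNE outcome is
   (c_max, ..., c_max) and equilibrium welfare is the explicit function
     - sum_i l_i(c_max) + gamma (n - 1) c_max^2 / B + rho n c_max,
   whose partial derivatives have the required signs. *)

Lemma left_chord_lt (a b : R) (l dl : R -> R) (x k : R) :
  has_deriv_on a b l dl -> a <= x < b -> dl b < k ->
  exists t, 0 < t < 1 /\ l b - l (t * x + (1 - t) * b) < k * (t * (b - x)).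
Proof.
  intros Hd Hx Hk.
  destruct (Hd b ltac:(lra) (k - dl b) ltac:(lra)) as [delta [Hdelta Hquot]].
  set (t := Rmin (1/2) (delta / (2 * (b - x)))).
  assert (Ht : 0 < t <= 1/2 /\ t * (b - x) < delta).
  { assert (Hbx : 0 < b - x) by lra.
    assert (Htpos : 0 < t) by (apply Rmin_pos; [lra | apply Rdiv_lt_0_compat; lra]).
    split; [split; [exact Htpos | apply Rmin_l] |].
    apply Rle_lt_trans with (delta / (2 * (b - x)) * (b - x)).
    - apply Rmult_le_compat_r; [lra | apply Rmin_r].
    - replace (delta / (2 * (b - x)) * (b - x)) with (delta / 2) by (field; lra); lra. }
  assert (Hstep : 0 < t * (b - x)) by (apply Rmult_lt_0_compat; lra).
  exists t; split; [lra |].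
  specialize (Hquot (- (t * (b - x)))).
  rewrite Rabs_Ropp, Rabs_pos_eq in Hquot by lra.
  replace (b + - (t * (b - x))) with (t * x + (1 - t) * b) in Hquot by ring.
  assert (Hrange : a <= t * x + (1 - t) * b <= b) by nra.
  specialize (Hquot ltac:(lra) ltac:(lra) Hrange).
  apply Rabs_def2 in Hquot; destruct Hquot as [Hquot _].
  set (q := (l (t * x + (1 - t) * b) - l b) / - (t * (b - x))) in Hquot.
  assert (Hq : l b - l (t * x + (1 - t) * b) = q * (t * (b - x)))
    by (unfold q; field; lra).
  rewrite Hq; apply Rmult_lt_compat_r; lra.
Qed.

(* Convexity bounds the chord slope on [x, b] by nearby left difference quotients at [b]. *)
Lemma cost_increment_lt (a b : R) (l dl : R -> R) (x k : R) :
  admissible_cost a b l dl -> a <= x < b -> dl b < k -> l b - l x < k * (b - x).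
Proof.
  intros [Hconv [[d2 [Hd _]] _]] Hx Hk.
  destruct (left_chord_lt a b l dl x k Hd Hx Hk) as [t [Ht Hchord]].
  assert (Hc : l (t * x + (1 - t) * b) < t * l x + (1 - t) * l b)
    by (apply Hconv; lra).
  assert (Hscaled : t * (l b - l x) < t * (k * (b - x))) by lra.
  apply Rmult_lt_reg_l in Hscaled; lra.
Qed.

Definition sum_list (f : nat -> R) (s : list nat) : R := fold_right Rplus 0 (map f s).

Lemma sum_list_ext (f g : nat -> R) (s : list nat) :
  (forall j, In j s -> f j = g j) -> sum_list f s = sum_list g s.
Proof.
  unfold sum_list; induction s as [|a s IH]; intros Hfg; simpl; [reflexivity |].
  rewrite Hfg, IH; [reflexivity | intros j Hj; apply Hfg | ]; simpl; auto.
Qed.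

Lemma sum_list_plus (f g : nat -> R) (s : list nat) :
  sum_list (fun j => f j + g j) s = sum_list f s + sum_list g s.
Proof. unfold sum_list; induction s as [|a s IH]; simpl; [ring | rewrite IH; ring]. Qed.

Lemma sum_list_const (k : R) (s : list nat) :
  sum_list (fun _ => k) s = INR (length s) * k.
Proof.
  unfold sum_list; induction s as [|a s IH]; [simpl; ring |].
  cbn [map fold_right length]; rewrite IH, S_INR; ring.
Qed.

Lemma sum_list_sub_single (f g : nat -> R) (s : list nat) (i : nat) :
  NoDup s -> In i s -> (forall j, j <> i -> f j = g j) ->
  sum_list f s - sum_list g s = f i - g i.
Proof.
  unfold sum_list; induction s as [|a s IH]; intros Hnd Hi Hfg; [destruct Hi |].
  inversion Hnd as [|? ? Ha Hnd']; subst; simpl.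
  destruct Hi as [<- | Hi].
  - assert (Hrest : sum_list f s = sum_list g s)
      by (apply sum_list_ext; intros j Hj; apply Hfg; intros ->; contradiction).
    unfold sum_list in Hrest; rewrite Hrest; ring.
  - rewrite (Hfg a) by (intros ->; contradiction).
    specialize (IH Hnd' Hi Hfg); lra.
Qed.

Lemma get_app_cons_at (p rest : list R) (y : R) :
  get (p ++ y :: rest) (S (length p)) = y.
Proof. apply nth_middle. Qed.

Lemma get_app_cons_ne (p rest : list R) (y z : R) (j : nat) :
  j <> S (length p) -> get (p ++ y :: rest) j = get (p ++ z :: rest) j.
Proof.
  destruct j as [|j]; [reflexivity |]; simpl; intros Hj.
  revert j Hj; induction p as [|a p IH]; intros [|j] Hj; simpl in *; auto; lia.
Qed.

Lemma get_app_repeat (p : list R) (a : R) (k j : nat) :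
  (length p < j <= length p + k)%nat -> get (p ++ repeat a k) j = a.
Proof.
  intros Hj; destruct j as [|j]; [lia |]; simpl.
  rewrite app_nth2 by lia; apply nth_repeat_lt; lia.
Qed.

Lemma total_app_cons_sub (n : nat) (p rest : list R) (y z : R) :
  (length p < n)%nat -> total n (p ++ y :: rest) - total n (p ++ z :: rest) = y - z.
Proof.
  intros Hlen; unfold total.
  change (sum_list (get (p ++ y :: rest)) (seq 1 n) - sum_list (get (p ++ z :: rest)) (seq 1 n)
          = y - z).
  rewrite (sum_list_sub_single _ _ _ (S (length p))), !get_app_cons_at.
  - reflexivity.
  - apply seq_NoDup.
  - apply in_seq; lia.
  - apply get_app_cons_ne.
Qed.

Lemma get_feasible_nonneg (cmin cmax : R) (h : list R) (j : nat) :
  0 <= cmin -> feasible_history cmin cmax h -> 0 <= get h j.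
Proof.
  intros Hcmin Hh; destruct j as [|j]; simpl; [lra |].
  revert j; induction Hh as [|y h Hy Hh IH]; intros [|j]; simpl; lra || apply IH.
Qed.

Lemma feasible_repeat (cmin cmax a : R) (k : nat) :
  cmin <= a <= cmax -> feasible_history cmin cmax (repeat a k).
Proof.
  intros Ha; apply Forall_forall; intros y Hy; apply repeat_spec in Hy; subst; exact Ha.
Qed.

Lemma feasible_snoc (cmin cmax : R) (h : list R) (y : R) :
  feasible_history cmin cmax h -> cmin <= y <= cmax ->
  feasible_history cmin cmax (h ++ y :: nil).
Proof. intros Hh Hy; apply Forall_app; auto. Qed.

Lemma max_range_ub (a b k : nat) (f : nat -> R) :
  (a <= k <= b)%nat -> f k <= max_range a b f.
Proof.
  intros Hk; unfold max_range.
  assert (Hin : In k (seq a (S (b - a)))) by (apply in_seq; lia).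
  generalize (f a); induction (seq a (S (b - a))) as [|j s IH]; intros d; [destruct Hin |].
  simpl; destruct Hin as [-> | Hin]; [apply Rmax_l |].
  eapply Rle_trans; [apply (IH Hin) | apply Rmax_r].
Qed.

Lemma share_gt_marginal_cost (n : nat) (f : nat -> R) (r : R) (i : nat) :
  r > INR n * max_range 1 n f -> (1 <= i <= n)%nat -> f i < r / INR n.
Proof.
  intros Hr Hi.
  assert (Hn : 0 < INR n) by (apply lt_0_INR; lia).
  assert (Hf := max_range_ub 1 n i f Hi).
  apply Rmult_lt_reg_l with (INR n); [exact Hn |].
  replace (INR n * (r / INR n)) with r by (field; lra); nra.
Qed.

Lemma play_add (s : strategy) (a b : nat) (h : list R) :
  play s (a + b) h = play s b (play s a h).
Proof. revert h; induction a as [|a IH]; intros h; simpl; auto. Qed.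

Lemma play_const (cmin cmax a : R) (s : strategy) (k : nat) (h : list R) :
  cmin <= a <= cmax -> feasible_history cmin cmax h ->
  (forall h', feasible_history cmin cmax h' ->
     (length h <= length h' < length h + k)%nat -> s (S (length h')) h' = a) ->
  play s k h = h ++ repeat a k.
Proof.
  intros Ha; revert h; induction k as [|k IH]; intros h Hh Hs; simpl.
  - rewrite app_nil_r; reflexivity.
  - rewrite (Hs h Hh) by lia.
    rewrite IH, <- app_assoc; [reflexivity | apply feasible_snoc; auto |].
    intros h' Hh' Hl; apply Hs; auto; rewrite length_app in Hl; simpl in Hl; lia.
Qed.

Lemma play_choice_then_const (cmin cmax a : R) (s : strategy) (k : nat) (h : list R) :
  cmin <= a <= cmax -> feasible_history cmin cmax h ->
  cmin <= s (S (length h)) h <= cmax ->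
  (forall h', feasible_history cmin cmax h' ->
     (length h < length h' <= length h + k)%nat -> s (S (length h')) h' = a) ->
  play s (S k) h = h ++ s (S (length h)) h :: repeat a k.
Proof.
  intros Ha Hh Hx Hs; simpl.
  rewrite (play_const cmin cmax a), <- app_assoc; [reflexivity | exact Ha | |].
  - apply feasible_snoc; assumption.
  - intros h' Hh' Hl; apply Hs; auto; rewrite length_app in Hl; simpl in Hl; lia.
Qed.

Lemma deviate_same (s : strategy) (i : nat) (t : list R -> R) (h : list R) :
  deviate s i t i h = t h.
Proof. unfold deviate; rewrite Nat.eqb_refl; reflexivity. Qed.

Lemma deviate_other (s : strategy) (i j : nat) (t : list R -> R) (h : list R) :
  j <> i -> deviate s i t j h = s j h.
Proof. intros Hji; unfold deviate; apply Nat.eqb_neq in Hji; rewrite Hji; reflexivity. Qed.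

Section DominantContribution.

Variables (n : nat) (cmin cmax P g r B : R) (l dl : nat -> R -> R).
Hypotheses (Hcmin : 0 < cmin) (Hcc : cmin <= cmax) (HP : 0 <= P) (Hg : 0 <= g)
  (HB : 0 < B) (HBc : B < cmax)
  (Hadm : forall i, (1 <= i <= n)%nat -> admissible_cost cmin cmax (l i) (dl i))
  (Hshare : forall i, (1 <= i <= n)%nat -> dl i cmax < r / INR n).

Lemma payoff_lt_at_max (p : list R) (x : R) :
  feasible_history cmin cmax p -> (length p < n)%nat -> cmin <= x < cmax ->
  payoff n l P g r B (p ++ x :: repeat cmax (n - S (length p))) (S (length p)) <
  payoff n l P g r B (p ++ cmax :: repeat cmax (n - S (length p))) (S (length p)).
Proof.
  intros Hp Hlen Hx.
  set (i := S (length p)); set (rest := repeat cmax (n - i)).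
  set (cx := p ++ x :: rest); set (cc := p ++ cmax :: rest).
  assert (Hprev : get cx (i - 1) = get cc (i - 1)) by (apply get_app_cons_ne; lia).
  assert (Hbonus : 0 <= g * (get cc (i - 1) / B) * (cmax - x)).
  { assert (Hcc_feas : feasible_history cmin cmax cc)
      by (apply Forall_app; split; [exact Hp | constructor; [lra | apply feasible_repeat; lra]]).
    assert (Hq := get_feasible_nonneg cmin cmax cc (i - 1) ltac:(lra) Hcc_feas).
    apply Rmult_le_pos; [apply Rmult_le_pos; [lra | apply Rdiv_le_0_compat; lra] | lra]. }
  assert (Hshared : r / INR n * total n cc - r / INR n * total n cx = r / INR n * (cmax - x)).
  { rewrite <- Rmult_minus_distr_l; unfold cc, cx; rewrite total_app_cons_sub by exact Hlen.
    reflexivity. }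
  assert (Hlast : get cc n = cmax).
  { apply (get_app_repeat p cmax (S (n - i))); unfold i in *; lia. }
  assert (Hcost := cost_increment_lt cmin cmax (l i) (dl i) x (r / INR n)
                     (Hadm i ltac:(unfold i; lia)) Hx (Hshare i ltac:(unfold i; lia))).
  unfold payoff; fold i; rewrite Hprev, Hlast; unfold cx, cc; rewrite !get_app_cons_at; fold cx cc.
  destruct (Rlt_dec cmax B); [lra |].
  destruct (Rlt_dec (get cx n) B); nra.
Qed.

Lemma const_max_is_SPNE : is_SPNE n cmin cmax l P g r B (fun _ _ => cmax).
Proof.
  split; [intros j h; lra |].
  intros h Hh Hlen i Hi t Ht.
  set (h1 := h ++ repeat cmax (i - 1 - length h)).
  assert (Hh1 : feasible_history cmin cmax h1)
    by (apply Forall_app; split; [exact Hh | apply feasible_repeat; lra]).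
  assert (Hi1 : i = S (length h1))
    by (unfold h1; rewrite length_app, repeat_length; lia).
  assert (Hplay : forall s, (forall j h', j <> i -> s j h' = cmax) -> cmin <= s i h1 <= cmax ->
            outcome n s h = h1 ++ s i h1 :: repeat cmax (n - S (length h1))).
  { intros s Hs Hx; unfold outcome.
    replace (n - length h)%nat with (i - 1 - length h + S (n - S (length h1)))%nat by lia.
    rewrite play_add, (play_const cmin cmax cmax s _ h); [fold h1 | lra | exact Hh |].
    - rewrite Hi1 in Hx |- *.
      apply (play_choice_then_const cmin cmax); auto; [lra |].
      intros h' _ Hl; apply Hs; lia.
    - intros h' _ Hl; apply Hs; lia. }
  rewrite !Hplay;
    [| intros; reflexivity | lra | intros j h' Hj; apply deviate_other, Hj
     | rewrite deviate_same; apply Ht].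
  rewrite deviate_same.
  rewrite Hi1; destruct (Ht h1) as [Hlo [Hlt | ->]]; [| lra].
  apply Rlt_le, payoff_lt_at_max; auto; rewrite Hi1 in Hi; lia.
Qed.

Lemma SPNE_plays_max (s : strategy) :
  is_SPNE n cmin cmax l P g r B s ->
  forall h, feasible_history cmin cmax h -> (length h < n)%nat -> s (S (length h)) h = cmax.
Proof.
  intros [Hfs Hs].
  assert (Hrem : forall k h, feasible_history cmin cmax h -> (length h < n)%nat ->
            (n - length h <= k)%nat -> s (S (length h)) h = cmax).
  { induction k as [|k IH]; intros h Hh Hlen Hk; [lia |].
    assert (Hlater : forall h', feasible_history cmin cmax h' ->
              (length h < length h' <= length h + (n - S (length h)))%nat ->
              s (S (length h')) h' = cmax)
      by (intros h' Hh' Hl; apply IH; auto; lia).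
    set (k' := (n - S (length h))%nat).
    set (i := S (length h)).
    assert (Hown : play s (S k') h = h ++ s i h :: repeat cmax k')
      by (apply (play_choice_then_const cmin cmax); auto; lra).
    assert (Hdev : play (deviate s i (fun _ => cmax)) (S k') h = h ++ cmax :: repeat cmax k').
    { rewrite (play_choice_then_const cmin cmax cmax), deviate_same; auto.
      - lra.
      - rewrite deviate_same; lra.
      - intros h' Hh' Hl; rewrite deviate_other by (unfold i; lia); auto. }
    specialize (Hs h Hh Hlen i ltac:(unfold i; lia) (fun _ => cmax) ltac:(intros; lra)).
    unfold outcome in Hs; replace (n - length h)%nat with (S k') in Hs by (unfold k'; lia).
    rewrite Hown, Hdev in Hs.
    destruct (Hfs i h) as [Hlo [Hlt | Heq]]; [exfalso | exact Heq].
    pose proof (payoff_lt_at_max h _ Hh Hlen (conj Hlo Hlt)) as Hgain; fold k' i in Hgain; lra. }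
  intros h Hh Hlen; eapply Hrem; eauto.
Qed.

Lemma SPNE_outcome_iff (c : list R) :
  is_SPNE_outcome n cmin cmax l P g r B c <-> c = repeat cmax n.
Proof.
  assert (Hout : forall s, is_SPNE n cmin cmax l P g r B s -> outcome n s nil = repeat cmax n).
  { intros s Hs; unfold outcome; rewrite Nat.sub_0_r.
    rewrite (play_const cmin cmax cmax s n nil); [reflexivity | lra | constructor |].
    intros h' Hh' Hl; apply (SPNE_plays_max s Hs); auto; simpl in Hl; lia. }
  split.
  - intros [s [Hs <-]]; apply Hout, Hs.
  - intros ->; exists (fun _ _ => cmax); split; [apply const_max_is_SPNE |].
    apply Hout, const_max_is_SPNE.
Qed.

End DominantContribution.

(* Agent 1 earns no cooperation bonus because c_0 = 0, hence the factor n - 1. *)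
Definition welfare_all_max (n : nat) (l : nat -> R -> R) (cmax g r B : R) : R :=
  sum_list (fun j => - l j cmax) (seq 1 n) + g * (INR (n - 1) * cmax * cmax) / B
  + r * (INR n * cmax).

Lemma welfare_repeat_max (n : nat) (l : nat -> R -> R) (P g r B cmax : R) :
  (1 <= n)%nat -> 0 < B -> B < cmax ->
  welfare n l P g r B (repeat cmax n) = welfare_all_max n l cmax g r B.
Proof.
  intros Hn HB HBc; destruct n as [|m]; [lia |].
  set (c := repeat cmax (S m)).
  assert (Hget : forall j, (1 <= j <= S m)%nat -> get c j = cmax)
    by (intros j Hj; apply (get_app_repeat nil cmax (S m)); simpl; lia).
  assert (Htot : total (S m) c = INR (S m) * cmax).
  { unfold total; change (sum_list (get c) (seq 1 (S m)) = INR (S m) * cmax).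
    rewrite (sum_list_ext _ (fun _ => cmax)), sum_list_const, length_seq; [reflexivity |].
    intros j Hj; apply in_seq in Hj; apply Hget; lia. }
  assert (Hpenalty : (if Rlt_dec (get c (S m)) B then 1 else 0) = 0)
    by (rewrite Hget by lia; destruct Rlt_dec; lra).
  unfold welfare, welfare_all_max; change (fold_right Rplus 0 (map ?f ?s)) with (sum_list f s).
  rewrite (sum_list_ext _ (fun j => - l j cmax + (g * (get c (j - 1) / B) * cmax + r * cmax))).
  2:{ intros j Hj; apply in_seq in Hj; unfold payoff.
      rewrite Hpenalty, Htot, Hget by lia; field; split; [lra | apply not_0_INR; lia]. }
  rewrite sum_list_plus; simpl (seq 1 (S m)); cbn [sum_list map fold_right].
  change (fold_right Rplus 0 (map ?f ?s)) with (sum_list f s).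
  rewrite (sum_list_ext (fun j => g * (get c (j - 1) / B) * cmax + r * cmax)
             (fun _ => g * (cmax / B) * cmax + r * cmax)).
  2:{ intros j Hj; apply in_seq in Hj; rewrite Hget by lia; reflexivity. }
  replace (S m - 1)%nat with m by lia.
  change (get c (1 - 1)) with 0; rewrite sum_list_const, length_seq, S_INR.
  field; lra.
Qed.

Lemma ex_filterdiff_welfare_all_max (n : nat) (l : nat -> R -> R) (cmax g r B : R) :
  0 < B ->
  ex_filterdiff
    (fun p : R * R * R => welfare_all_max n l cmax (fst (fst p)) (snd (fst p)) (snd p))
    (locally (g, r, B)).
Proof.
  intros HB.
  set (A := sum_list (fun j => - l j cmax) (seq 1 n)).
  set (K := INR (n - 1) * cmax * cmax); set (M := INR n * cmax).
  assert (Hg : ex_filterdiff (fun p : R * R * R => fst (fst p)) (locally (g, r, B)))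
    by (apply ex_filterdiff_linear, (is_linear_comp (fun p : R * R * R => fst p) fst);
        apply is_linear_fst).
  assert (Hr : ex_filterdiff (fun p : R * R * R => snd (fst p)) (locally (g, r, B)))
    by (apply ex_filterdiff_linear, (is_linear_comp (fun p : R * R * R => fst p) snd);
        [apply is_linear_fst | apply is_linear_snd]).
  assert (HinvB : ex_filterdiff (fun p : R * R * R => / snd p) (locally (g, r, B))).
  { apply (ex_filterdiff_comp' (fun p : R * R * R => snd p) Rinv);
      [apply ex_filterdiff_linear, is_linear_snd |].
    apply ex_derive_filterdiff; simpl; auto_derive; lra. }
  assert (Hconst : forall a : R, ex_filterdiff (fun _ : R * R * R => a) (locally (g, r, B)))
    by (intros a; apply ex_filterdiff_const).
  assert (Hsum := ex_filterdiff_plus_fct _ _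
    (ex_filterdiff_plus_fct _ _ (Hconst A)
       (ex_filterdiff_mult_fct _ _ _ Rmult_comm Hg
          (ex_filterdiff_mult_fct _ _ _ Rmult_comm (Hconst K) HinvB)))
    (ex_filterdiff_mult_fct _ _ _ Rmult_comm Hr (Hconst M))).
  revert Hsum; apply ex_filterdiff_ext; intros p.
  unfold welfare_all_max, plus, mult; simpl; fold A K M; unfold Rdiv; ring.
Qed.

Lemma is_derive_welfare_all_max_gamma (n : nat) (l : nat -> R -> R) (cmax g r B : R) :
  0 < B ->
  is_derive (fun x => welfare_all_max n l cmax x r B) g (INR (n - 1) * cmax * cmax / B).
Proof. intros HB; unfold welfare_all_max; auto_derive; [lra | field; lra]. Qed.

Lemma is_derive_welfare_all_max_rho (n : nat) (l : nat -> R -> R) (cmax g r B : R) :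
  0 < B -> is_derive (fun x => welfare_all_max n l cmax g x B) r (INR n * cmax).
Proof. intros HB; unfold welfare_all_max; auto_derive; [lra | ring]. Qed.

Lemma is_derive_welfare_all_max_B (n : nat) (l : nat -> R -> R) (cmax g r B : R) :
  0 < B ->
  is_derive (fun x => welfare_all_max n l cmax g r x) B
    (- (g * (INR (n - 1) * cmax * cmax) / (B * B))).
Proof. intros HB; unfold welfare_all_max; auto_derive; [lra | field; lra]. Qed.

Lemma welfare_all_max_sensitivity (n : nat) (l : nat -> R -> R) (cmax g r B : R) :
  (2 <= n)%nat -> 0 < cmax -> 0 < g -> 0 < B ->
  (exists d, is_derive (fun x => welfare_all_max n l cmax x r B) g d /\ 0 < d) /\
  (exists d, is_derive (fun x => welfare_all_max n l cmax g x B) r d /\ 0 < d) /\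
  (exists d, is_derive (fun x => welfare_all_max n l cmax g r x) B d /\ d < 0).
Proof.
  intros Hn Hcmax Hg HB.
  assert (HK : 0 < INR (n - 1) * cmax * cmax)
    by (assert (0 < INR (n - 1)) by (apply lt_0_INR; lia); repeat apply Rmult_lt_0_compat; lra).
  assert (HM : 0 < INR n * cmax)
    by (assert (0 < INR n) by (apply lt_0_INR; lia); apply Rmult_lt_0_compat; lra).
  split; [| split].
  - exists (INR (n - 1) * cmax * cmax / B); split; [| apply Rdiv_lt_0_compat; lra].
    exact (is_derive_welfare_all_max_gamma n l cmax g r B HB).
  - exists (INR n * cmax); split; [| exact HM].
    exact (is_derive_welfare_all_max_rho n l cmax g r B HB).
  - exists (- (g * (INR (n - 1) * cmax * cmax) / (B * B))); split.
    + exact (is_derive_welfare_all_max_B n l cmax g r B HB).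
    + enough (0 < g * (INR (n - 1) * cmax * cmax) / (B * B)) by lra.
      apply Rdiv_lt_0_compat; apply Rmult_lt_0_compat; lra.
Qed.

Lemma locally_slices (U : R * R * R -> Prop) (g r B : R) :
  locally (g, r, B) U ->
  locally g (fun x => U (x, r, B)) /\ locally r (fun x => U (g, x, B)) /\
  locally B (fun x => U (g, r, x)).
Proof.
  intros [eps Heps].
  split; [|split]; exists eps; intros y Hy; apply Heps;
    repeat split; simpl; auto; apply ball_center.
Qed.

Theorem theorem2 (n : nat) (cmin cmax P : R) (l dl : nat -> R -> R)
    (U : R * R * R -> Prop) :
  (2 <= n)%nat -> 0 < cmin -> cmin <= cmax -> 0 < P ->
  (forall i, (1 <= i <= n)%nat -> admissible_cost cmin cmax (l i) (dl i)) ->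
  open U ->
  (forall g r B, U (g, r, B) ->
     0 < g /\ 0 < r /\ 0 < B /\ B < cmax /\
     r > INR n * max_range 1 n (fun i => dl i cmax) /\
     g > max_range 2 n (fun k => (dl k cmax * B - r / INR n) / (cmin / B)) /\
     P > (max_range 1 n (fun i => dl i cmax) + g * (cmax / B) + r / INR n)
           * (cmax - cmin)) ->
  (forall g r B, U (g, r, B) ->
     (exists c, is_SPNE_outcome n cmin cmax l P g r B c) /\
     (forall c1 c2, is_SPNE_outcome n cmin cmax l P g r B c1 ->
                    is_SPNE_outcome n cmin cmax l P g r B c2 -> c1 = c2)) /\
  (forall cstar : R -> R -> R -> list R,
     (forall g r B, U (g, r, B) ->
        is_SPNE_outcome n cmin cmax l P g r B (cstar g r B)) ->
     let W := fun p : R * R * R =>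
       welfare n l P (fst (fst p)) (snd (fst p)) (snd p)
         (cstar (fst (fst p)) (snd (fst p)) (snd p)) in
     forall g r B, U (g, r, B) ->
       ex_filterdiff W (locally (g, r, B)) /\
       (exists d, is_derive (fun x => W (x, r, B)) g d /\ 0 < d) /\
       (exists d, is_derive (fun x => W (g, x, B)) r d /\ 0 < d) /\
       (exists d, is_derive (fun x => W (g, r, x)) B d /\ d < 0)).
Proof.
  intros Hn Hcmin Hcc HP Hadm Hopen HU.
  assert (Hout : forall g r B c, U (g, r, B) ->
            is_SPNE_outcome n cmin cmax l P g r B c <-> c = repeat cmax n).
  { intros g r B c HUp; destruct (HU g r B HUp) as (Hg & _ & HB & HBc & Hr & _).
    apply (SPNE_outcome_iff n cmin cmax P g r B l dl); auto; try lra.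
    intros i Hi; apply (share_gt_marginal_cost n (fun i => dl i cmax)); auto. }
  split.
  - intros g r B HUp; split.
    + exists (repeat cmax n); apply (Hout g r B _ HUp); reflexivity.
    + intros c1 c2 H1 H2; apply (Hout g r B _ HUp) in H1, H2; congruence.
  - intros cstar Hcs W g r B HUp.
    set (F := fun p : R * R * R =>
                welfare_all_max n l cmax (fst (fst p)) (snd (fst p)) (snd p)).
    assert (HWF : forall p, U p -> F p = W p).
    { intros [[g' r'] B'] HUp'; destruct (HU g' r' B' HUp') as (_ & _ & HB' & HBc' & _).
      unfold F, W; simpl; rewrite (proj1 (Hout _ _ _ _ HUp') (Hcs _ _ _ HUp')).
      symmetry; apply welfare_repeat_max; lia || lra. }
    destruct (HU g r B HUp) as (Hg & _ & HB & HBc & _).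
    destruct (locally_slices U g r B (Hopen _ HUp)) as (Ug & Ur & UB).
    destruct (welfare_all_max_sensitivity n l cmax g r B) as
      ([dg [Dg Hdg]] & [dr [Dr Hdr]] & [dB [DB HdB]]); try lia; try lra.
    split; [| split; [| split]].
    + apply (ex_filterdiff_ext_locally F); [exact (filter_imp _ _ HWF (Hopen _ HUp)) |].
      apply ex_filterdiff_welfare_all_max; lra.
    + exists dg; split; [| exact Hdg].
      exact (is_derive_ext_loc _ _ g dg (filter_imp _ _ (fun x => HWF _) Ug) Dg).
    + exists dr; split; [| exact Hdr].
      exact (is_derive_ext_loc _ _ r dr (filter_imp _ _ (fun x => HWF _) Ur) Dr).
    + exists dB; split; [| exact HdB].
      exact (is_derive_ext_loc _ _ B dB (filter_imp _ _ (fun x => HWF _) UB) DB).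
Qed.
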